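(* Let $T$ be a tree rooted at $r$, and let $Z$ be a set of vertices. Then: (a) If $\alpha(T)>\alpha(T-Z)$ and $r$ is $\alpha$-critical in $T$, then either (i) there exist two (possibly non-distinct) vertices $u,v\in Z\cap V(T)$ such that $\alpha(T)>\alpha(T-\{u,v\})$ and $r$ is $\alpha$-critical in $T-\{u,v\}$, or (ii) there exists a vertex $u\in Z\cap V(T)$ such that $\alpha(T)>\alpha(T-u)$ and $r$ is not $\alpha$-critical in $T-u$. (b) If $\alpha(T)=\alpha(T-Z)$ and $r$ is $\alpha$-critical in $T-Z$ but not in $T$, then there exists a vertex $u\in Z\cap V(T)$ such that $r$ is $\alpha$-critical in $T-u$.
   Context: $\alpha(H)$ is the independence number of a graph $H$. A vertex $v$ of $H$ is $\alpha$-critical in $H$ if it belongs to every maximum independent set of $H$, i.e. $\alpha(H) = 1+\alpha(H-v)$ (in particular $v\in V(H)$). $T-S$ denotes $T$ with the vertices of $S\cap V(T)$ and incident edges removed. *)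

(* A simple graph is a symmetric irreflexive relation [e] on a
   finite vertex type [V]; a (sub)graph such as a tree T, or T - S, is the
   subgraph induced by a vertex set [A : {set V}]. *)
From mathcomp Require Import all_boot.
Set Implicit Arguments. Unset Strict Implicit. Unset Printing Implicit Defensive.

Definition simple_graph (V : finType) (e : rel V) : Prop :=
  symmetric e /\ irreflexive e.

Definition induced (V : finType) (e : rel V) (A : {set V}) : rel V :=
  [rel x y | [&& x \in A, y \in A & e x y]].

Definition connected_on (V : finType) (e : rel V) (A : {set V}) : Prop :=
  forall x y, x \in A -> y \in A -> connect (induced e A) x y.

Definition acyclic_on (V : finType) (e : rel V) (A : {set V}) : Prop :=
  forall c : seq V, 3 <= size c -> ~ ucycle (induced e A) c.

Definition is_tree (V : finType) (e : rel V) (A : {set V}) : Prop :=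
  A != set0 /\ connected_on e A /\ acyclic_on e A.

Definition independent (V : finType) (e : rel V) (S : {set V}) : bool :=
  [forall x in S, forall y in S, ~~ e x y].

Definition alpha (V : finType) (e : rel V) (A : {set V}) : nat :=
  \max_(S : {set V} | (S \subset A) && independent e S) #|S|.

Definition alpha_critical (V : finType) (e : rel V) (A : {set V}) (v : V) : Prop :=
  v \in A /\ alpha e A = (alpha e (A :\ v)).+1.

(* Cutting a rooted forest (F, r) along an edge r-c, or splitting off an
   isolated root, gives two rooted forests (F1, r) and (F2, c) with
     alpha (F1 + F2) = alpha F1 + alpha F2 - [r crit. in F1 and c crit. in F2],
     r crit. in F1 + F2  <->  r crit. in F1 and c not crit. in F2,
   and the same holds after deleting any vertex set Y from both parts.  So the
   "outcome" of deleting Y (the drop of alpha and whether r stays critical) is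
   a function of the outcomes in the two parts.  Collect in a finite profile:
   whether r is critical, the outcome of deleting Z (drop capped at 2), and
   outcomes attained by deleting one, resp. two, vertices of Z.  The profile
   of a composite is then determined, up to a bounded ambiguity, by those of
   its parts, and the profiles generated from single vertices form a closed
   set of 79 elements, computed once and for all; each of them satisfies (a)
   and (b), and by induction every rooted forest has one of these profiles. *)

From mathcomp Require Import all_boot zify.
Set Implicit Arguments. Unset Strict Implicit. Unset Printing Implicit Defensive.

Lemma setD1_id (T : finType) (A : {set T}) v : v \notin A -> A :\ v = A.
Proof. by move=> vA; apply/setDidPl; rewrite disjoint_sym disjoints1. Qed.

Lemma disjoint_set2 (T : finType) (A : {set T}) u v :
  u \notin A -> v \notin A -> [disjoint A & [set u; v]].
Proof.
by move=> uA vA; rewrite disjoint_sym -setI_eq0 setIUl !disjoint_setI0 ?setU0 ?disjoints1.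
Qed.

(** * Independence number and critical vertices *)

Section IndependenceNumber.
Variables (V : finType) (e : rel V).
Hypotheses (e_sym : symmetric e) (e_irr : irreflexive e).

Lemma independentP (S : {set V}) :
  reflect {in S &, forall x y, ~~ e x y} (independent e S).
Proof.
apply: (iffP forallP) => [h x y xS yS | h x]; last first.
  by apply/implyP => xS; apply/forall_inP => y yS; apply: h.
by move: (h x); rewrite xS => /forall_inP; apply.
Qed.

Lemma independentS (S1 S2 : {set V}) :
  S1 \subset S2 -> independent e S2 -> independent e S1.
Proof.
move=> /subsetP sS12 /independentP iS2; apply/independentP => x y xS yS.
by apply: iS2; apply: sS12.
Qed.

Lemma independentU (S1 S2 : {set V}) :
  independent e S1 -> independent e S2 ->
  {in S1 & S2, forall x y, ~~ e x y} -> independent e (S1 :|: S2).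
Proof.
move=> /independentP i1 /independentP i2 i12; apply/independentP => x y.
rewrite !inE => /orP[] xS /orP[] yS; [exact: i1 | exact: i12 | | exact: i2].
by rewrite e_sym; apply: i12.
Qed.

Lemma alpha_max (A S : {set V}) :
  S \subset A -> independent e S -> #|S| <= alpha e A.
Proof. by move=> sSA iS; apply: (bigmax_sup S) => //; rewrite sSA. Qed.

Lemma alpha_witness (A : {set V}) :
  exists S : {set V}, [/\ S \subset A, independent e S & #|S| = alpha e A].
Proof.
have : 0 < #|(fun S : {set V} => (S \subset A) && independent e S)|.
  apply/card_gt0P; exists set0; rewrite unfold_in /= sub0set.
  by apply/independentP => x; rewrite inE.
by case/(eq_bigmax_cond (fun S : {set V} => #|S|)) => S /andP[sSA iS] defA; exists S.
Qed.

Lemma alphaS (A B : {set V}) : A \subset B -> alpha e A <= alpha e B.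
Proof.
move=> sAB; have [S [sSA iS <-]] := alpha_witness A.
exact: alpha_max (subset_trans sSA sAB) iS.
Qed.

Lemma alpha_set0 : alpha e set0 = 0.
Proof.
have [S [+ _ <-]] := alpha_witness set0.
by rewrite subset0 => /eqP ->; rewrite cards0.
Qed.

Lemma alpha_set1 v : alpha e [set v] = 1.
Proof.
apply/eqP; rewrite eqn_leq; apply/andP; split.
  by have [S [sS _ <-]] := alpha_witness [set v]; rewrite -(cards1 v) subset_leq_card.
rewrite -(cards1 v); apply: alpha_max => //.
by apply/independentP => x y; rewrite !inE => /eqP -> /eqP ->; rewrite e_irr.
Qed.

Lemma alpha_split (X1 X2 : {set V}) : [disjoint X1 & X2] ->
  exists S1 S2 : {set V},
    [/\ S1 \subset X1, S2 \subset X2, independent e (S1 :|: S2)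
      & alpha e (X1 :|: X2) = #|S1| + #|S2|].
Proof.
move=> dX; have [S [sSX iS <-]] := alpha_witness (X1 :|: X2).
exists (S :&: X1), (S :&: X2); rewrite !subsetIr -setIUr.
rewrite (setIidPl sSX); split => //.
rewrite -(cardsID X1 S); congr (_ + _); apply: eq_card => x; rewrite !inE.
case xS: (x \in S); rewrite ?andbF //=.
by move: (subsetP sSX x xS); rewrite inE; case: (boolP (x \in X1)) => [/(disjointFr dX)->|].
Qed.

Lemma alpha_union_ge (A1 A2 : {set V}) : [disjoint A1 & A2] ->
  {in A1 & A2, forall x y, ~~ e x y} ->
  alpha e A1 + alpha e A2 <= alpha e (A1 :|: A2).
Proof.
move=> dA nA; have [S1 [sS1 iS1 <-]] := alpha_witness A1.
have [S2 [sS2 iS2 <-]] := alpha_witness A2.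
rewrite -cardsUI (disjoint_setI0 (disjointWl sS1 (disjointWr sS2 dA))) cards0 addn0.
apply: alpha_max; first exact: setUSS.
by apply: independentU => // x y xS yS; apply: nA; [apply: (subsetP sS1) | apply: (subsetP sS2)].
Qed.

Lemma alpha_bridge (X1 X2 : {set V}) r c : [disjoint X1 & X2] -> e r c ->
  {in X1 & X2, forall x y, e x y -> (x == r) && (y == c)} ->
  alpha e (X1 :|: X2) =
    maxn (alpha e X1 + alpha e (X2 :\ c)) (alpha e (X1 :\ r) + alpha e X2).
Proof.
move=> dX erc only_rc; apply/eqP; rewrite eqn_leq geq_max; apply/and3P; split.
- have [S1 [S2 [sS1 sS2 iS ->]]] := alpha_split dX.
  have iS1 : independent e S1 by apply: independentS iS; apply: subsetUl.
  have iS2 : independent e S2 by apply: independentS iS; apply: subsetUr.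
  rewrite leq_max; case: (boolP (r \in S1)) => rS1; last first.
    by rewrite orbC leq_add ?alpha_max // subsetD1 sS1.
  have cS2 : c \notin S2.
    by apply: contraL erc => cS2; move/independentP: iS; apply; rewrite inE ?rS1 ?cS2 ?orbT.
  by rewrite leq_add ?alpha_max // subsetD1 sS2.
- apply: leq_trans (alphaS (setUS X1 (subsetDl X2 [set c]))).
  apply: alpha_union_ge => [|x y xX1]; first exact: disjointWr (subsetDl _ _) dX.
  by rewrite !inE => /andP[yc yX2]; apply: contraNN yc => /(only_rc x y xX1 yX2)/andP[].
- apply: leq_trans (alphaS (setSU X2 (subsetDl X1 [set r]))).
  apply: alpha_union_ge => [|x y]; first exact: disjointWl (subsetDl _ _) dX.
  by rewrite !inE => /andP[xr xX1] yX2; apply: contraNN xr => /(only_rc x y xX1 yX2)/andP[].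
Qed.

Lemma alpha_union (X1 X2 : {set V}) : [disjoint X1 & X2] ->
  {in X1 & X2, forall x y, ~~ e x y} -> alpha e (X1 :|: X2) = alpha e X1 + alpha e X2.
Proof.
move=> dX nX; apply/eqP; rewrite eqn_leq alpha_union_ge // andbT.
have [S1 [S2 [sS1 sS2 iS ->]]] := alpha_split dX.
by rewrite leq_add // alpha_max // (independentS _ iS) // (subsetUl, subsetUr).
Qed.

Definition critical (A : {set V}) (v : V) : bool :=
  (v \in A) && (alpha e A == (alpha e (A :\ v)).+1).

Lemma criticalP (A : {set V}) v : reflect (alpha_critical e A v) (critical A v).
Proof. by apply: (iffP andP) => -[vA /eqP]. Qed.

Lemma alpha_setD1 (A : {set V}) v : alpha e (A :\ v) + critical A v = alpha e A.
Proof.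
rewrite /critical; case: (boolP (v \in A)) => vA /=; first last.
  by rewrite setD1_id ?addn0.
have le1 : alpha e (A :\ v) <= alpha e A by apply/alphaS/subsetDl.
have le2 : alpha e A <= (alpha e (A :\ v)).+1.
  have [S [sSA iS <-]] := alpha_witness A.
  have : #|S :\ v| <= alpha e (A :\ v).
    by apply: alpha_max; [apply: setSD | apply: independentS iS; apply: subsetDl].
  by have := cardsD1 v S; case: (v \in S) => /=; lia.
by case: eqP; lia.
Qed.

Lemma critical_bridge (X1 X2 : {set V}) r c : [disjoint X1 & X2] -> e r c ->
  {in X1 & X2, forall x y, e x y -> (x == r) && (y == c)} -> r \notin X2 ->
  alpha e (X1 :|: X2) + (critical X1 r && critical X2 c) = alpha e X1 + alpha e X2 /\
  critical (X1 :|: X2) r = critical X1 r && ~~ critical X2 c.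
Proof.
move=> dX erc only_rc rX2.
have a12 := alpha_bridge dX erc only_rc.
have a1r2 : alpha e ((X1 :|: X2) :\ r) = alpha e (X1 :\ r) + alpha e X2.
  rewrite setDUl (setD1_id rX2) (alpha_bridge _ erc) //.
  - by rewrite setDDl setUid; apply/maxn_idPr; rewrite leq_add2l; apply/alphaS/subsetDl.
  - exact: disjointWl (subsetDl _ _) dX.
  - by move=> x y; rewrite inE => /andP[_]; apply: only_rc.
have := alpha_setD1 X1 r; have := alpha_setD1 X2 c; have := alpha_setD1 (X1 :|: X2) r.
by case: (critical X1 r); case: (critical X2 c); case: (critical _ r) => /=; lia.
Qed.

Lemma critical_union (X1 X2 : {set V}) r : [disjoint X1 & X2] ->
  {in X1 & X2, forall x y, ~~ e x y} -> r \notin X2 ->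
  alpha e (X1 :|: X2) = alpha e X1 + alpha e X2 /\
  critical (X1 :|: X2) r = critical X1 r.
Proof.
move=> dX nX rX2; have a12 := alpha_union dX nX.
have a1r2 : alpha e ((X1 :|: X2) :\ r) = alpha e (X1 :\ r) + alpha e X2.
  rewrite setDUl (setD1_id rX2) alpha_union //; first exact: disjointWl (subsetDl _ _) dX.
  by move=> x y; rewrite inE => /andP[_]; apply: nX.
split=> //; have := alpha_setD1 X1 r; have := alpha_setD1 (X1 :|: X2) r.
by case: (critical X1 r); case: (critical _ r) => /=; lia.
Qed.

End IndependenceNumber.

Arguments criticalP {V e A v}.

(** * Outcomes of deletions in a split forest *)

(* Outcome (drop of alpha, criticality of the root) of a deletion in two parts
   joined by an edge between their roots, resp. without edges; [k] says whether
   both roots are critical before the deletion. *)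
Definition bridge_outcome (k : bool) (o1 o2 : nat * bool) : nat * bool :=
  (o1.1 + o2.1 + (o1.2 && o2.2) - k, o1.2 && ~~ o2.2).

Definition union_outcome (o1 o2 : nat * bool) : nat * bool := (o1.1 + o2.1, o1.2).

Definition capped (o : nat * bool) : nat * bool := (minn o.1 2, o.2).

Lemma bridge_outcome_capped k p q x y :
  capped (bridge_outcome k (p, x) (q, y)) = capped (bridge_outcome k (minn p 3, x) (minn q 3, y)).
Proof. by rewrite /capped /=; congr pair; case: k; case: x; case: y => /=; lia. Qed.

Lemma union_outcome_capped p q x y :
  capped (union_outcome (p, x) (q, y)) = capped (union_outcome (minn p 3, x) (minn q 3, y)).
Proof. by rewrite /capped /=; congr pair; lia. Qed.

Lemma drop_bridge_arith (a a1 a2 b b1 b2 k k' : nat) :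
  b <= a -> b1 <= a1 -> b2 <= a2 -> a + k = a1 + a2 -> b + k' = b1 + b2 ->
  a - b = a1 - b1 + (a2 - b2) + k' - k.
Proof. lia. Qed.

Section Outcomes.
Variables (V : finType) (e : rel V).
Hypothesis e_sym : symmetric e.

Definition outcome (F : {set V}) (r : V) (Y : {set V}) : nat * bool :=
  (alpha e F - alpha e (F :\: Y), critical e (F :\: Y) r).

Lemma outcome_setIr (F Y : {set V}) r : outcome F r (F :&: Y) = outcome F r Y.
Proof. by rewrite /outcome setDIr setDv set0U. Qed.

Lemma eq_outcome (F Y Y' : {set V}) r : F :&: Y = F :&: Y' -> outcome F r Y = outcome F r Y'.
Proof. by move=> eqY; rewrite -outcome_setIr eqY outcome_setIr. Qed.

Lemma outcome0 (F : {set V}) r : outcome F r set0 = (0, critical e F r).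
Proof. by rewrite /outcome setD0 subnn. Qed.

Lemma outcome_disjoint (F Y : {set V}) r : [disjoint F & Y] -> outcome F r Y = (0, critical e F r).
Proof. by move=> /setDidPl dFY; rewrite /outcome dFY subnn. Qed.

Lemma outcome_bridge (F1 F2 : {set V}) r c : [disjoint F1 & F2] -> e r c ->
    {in F1 & F2, forall x y, e x y -> (x == r) && (y == c)} -> r \notin F2 ->
  forall Y, outcome (F1 :|: F2) r Y =
    bridge_outcome (critical e F1 r && critical e F2 c) (outcome F1 r Y) (outcome F2 c Y).
Proof.
move=> dF erc only_rc rF2 Y; have [a12 _] := critical_bridge e_sym dF erc only_rc rF2.
have dFY : [disjoint F1 :\: Y & F2 :\: Y].
  exact: disjointWl (subsetDl _ _) (disjointWr (subsetDl _ _) dF).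
have rFY : r \notin F2 :\: Y by apply: contra rF2 => /setDP[].
have [a12Y cY] := critical_bridge e_sym dFY erc
  (fun x y xF1 yF2 => only_rc x y (subsetP (subsetDl _ _) x xF1) (subsetP (subsetDl _ _) y yF2))
  rFY.
have := alphaS e (subsetDl (F1 :|: F2) Y).
have := alphaS e (subsetDl F1 Y); have := alphaS e (subsetDl F2 Y).
rewrite /outcome /bridge_outcome setDUl cY /= => le1 le2 le12; congr pair.
exact: drop_bridge_arith a12 a12Y.
Qed.

Lemma outcome_union (F1 F2 : {set V}) r r' : [disjoint F1 & F2] ->
    {in F1 & F2, forall x y, ~~ e x y} -> r \notin F2 ->
  forall Y, outcome (F1 :|: F2) r Y = union_outcome (outcome F1 r Y) (outcome F2 r' Y).
Proof.
move=> dF nF rF2 Y; have [a12 _] := critical_union e_sym dF nF rF2.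
have dFY : [disjoint F1 :\: Y & F2 :\: Y].
  exact: disjointWl (subsetDl _ _) (disjointWr (subsetDl _ _) dF).
have rFY : r \notin F2 :\: Y by apply: contra rF2 => /setDP[].
have [a12Y cY] := critical_union e_sym dFY
  (fun x y xF1 yF2 => nF x y (subsetP (subsetDl _ _) x xF1) (subsetP (subsetDl _ _) y yF2)) rFY.
rewrite /outcome /union_outcome setDUl cY /=; congr pair.
have := alphaS e (subsetDl F1 Y); have := alphaS e (subsetDl F2 Y); lia.
Qed.

End Outcomes.

Section Forests.
Variables (V : finType) (e : rel V).
Hypotheses (e_sym : symmetric e) (e_irr : irreflexive e).

Lemma acyclic_onS (A B : {set V}) : A \subset B -> acyclic_on e B -> acyclic_on e A.
Proof.
move=> sAB acB s s3 /andP[cs us]; apply: (acB s s3); rewrite /ucycle us andbT.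
apply: sub_cycle cs => x y /and3P[xA yA exy].
by rewrite /induced /= (subsetP sAB x xA) (subsetP sAB y yA).
Qed.

Definition branch (F : {set V}) (r c : V) : {set V} :=
  [set x in F :\ r | connect (induced e (F :\ r)) c x].

Lemma branch_sub (F : {set V}) r c : branch F r c \subset F :\ r.
Proof. by apply/subsetP => x; rewrite inE => /andP[]. Qed.

Lemma mem_branch (F : {set V}) r c : c \in F -> e r c -> c \in branch F r c.
Proof.
move=> cF erc; rewrite inE connect0 !inE cF andbT andbT.
by apply: contraTneq erc => ->; rewrite e_irr.
Qed.

Lemma path_induced (A : {set V}) x p : path (induced e A) x p -> {subset p <= A}.
Proof.
elim: p x => [|y p IHp] x //= /andP[/and3P[_ yA _] /IHp pA] z.
by rewrite inE => /predU1P[-> //|]; apply: pA.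
Qed.

Lemma branch_root_neighbour (F : {set V}) r c y : acyclic_on e F -> r \in F -> c \in F ->
  e r c -> y \in branch F r c -> e r y -> y = c.
Proof.
rewrite /acyclic_on => acF rF cF erc; rewrite inE => /andP[yF /connectP[p cp ->]] ery.
apply/eqP/negPn/negP => yc.
case: (shortenP cp) ery yc => q cq /= /andP[cq' uq] _ ery yc.
have q0 : q != [::] by apply: contraNneq yc => ->.
have rq : r \notin q by apply: contraT => /negPn /(path_induced cq); rewrite !inE eqxx.
apply: (acF [:: r, c & q]); first by case: q q0 {cq cq' uq rq ery yc}.
apply/andP; split; last first.
  rewrite /= inE negb_or rq cq' uq !andbT.
  by apply: contraTneq erc => ->; rewrite e_irr.
rewrite /= rcons_path /induced /= rF cF erc /=; apply/andP; split.
  by apply: sub_path cq => a b /and3P[/setD1P[_ aF] /setD1P[_ bF] eab]; apply/and3P.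
have := path_induced cq; case/lastP: q q0 ery {cq cq' uq rq yc} => // q z _.
rewrite last_rcons e_sym => -> /(_ z); rewrite mem_rcons mem_head andbT => /(_ isT).
by case/setD1P.
Qed.

Lemma branch_bridge (F : {set V}) r c : acyclic_on e F -> r \in F -> c \in F -> e r c ->
  {in F :\: branch F r c & branch F r c, forall x y, e x y -> (x == r) && (y == c)}.
Proof.
move=> acF rF cF erc x y /setDP[xF xB] yB exy.
have xr : x = r.
  apply: contraNeq xB => xr; move: yB; rewrite !inE xr xF /= => /andP[yFr cy].
  by apply: connect_trans cy (connect1 _); rewrite /induced /= !inE xr xF yFr e_sym.
by rewrite xr eqxx (branch_root_neighbour acF rF cF erc yB) -?xr ?eqxx.
Qed.

End Forests.

(** * Profiles *)

(* (r critical, capped outcome of deleting Z, outcomes of deleting one vertex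
   of Z, outcomes of deleting two vertices of Z); the lists are kept in the
   canonical order of [canon] so that profiles range over a finite set. *)
Definition profile := (bool * (nat * bool) * seq (nat * bool) * seq (nat * bool))%type.

Definition canon (n : nat) (s : seq (nat * bool)) : seq (nat * bool) :=
  [seq o <- [seq (i, b) | i <- iota 0 n, b <- [:: false; true]] | o \in s].

(* A capped drop 2 means a drop of at least 2, and a drop capped at 3 is enough
   to know the capped drop of a composite (bridge_outcome_capped). *)
Definition drop_candidates (z : nat) : seq nat := if z < 2 then [:: z] else [:: 2; 3].

Lemma mem_canon n s o : o \in canon n s -> o \in s.
Proof. by rewrite mem_filter => /andP[]. Qed.

Lemma drop_candidates_capped n : minn n 3 \in drop_candidates (minn n 2).
Proof. by case: n => [|[|[|n]]]. Qed.

Definition compose (cb : nat * bool -> nat * bool -> nat * bool) (t1 t2 : profile) : seq profile :=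
  let: (c1, (z1, cZ1), s1, p1) := t1 in
  let: (c2, (z2, cZ2), s2, p2) := t2 in
  [seq ((cb (0, c1) (0, c2)).2, capped (cb (a, cZ1) (b, cZ2)),
        canon 2 ([seq cb o (0, c2) | o <- s1] ++ [seq cb (0, c1) o | o <- s2]),
        canon 3 ([seq cb o (0, c2) | o <- p1] ++ [seq cb (0, c1) o | o <- p2]
                 ++ [seq cb o o' | o <- s1, o' <- s2]))
   | a <- drop_candidates z1, b <- drop_candidates z2].

Definition root_critical (t : profile) : bool := t.1.1.1.

Definition compose_bridge (t1 t2 : profile) : seq profile :=
  compose (bridge_outcome (root_critical t1 && root_critical t2)) t1 t2.
Definition compose_union : profile -> profile -> seq profile := compose union_outcome.

Definition leaf_profile (inZ : bool) : profile :=
  if inZ then (true, (1, false), [:: (1, false)], [:: (1, false)])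
  else (true, (0, true), [::], [::]).

Definition successors (L : seq profile) : seq profile :=
  flatten [seq compose_bridge t1 t2 | t1 <- L, t2 <- L] ++
  flatten [seq compose_union (leaf_profile b) t | b <- [:: true; false], t <- L].

Definition saturate (L : seq profile) : seq profile :=
  foldr (fun t L' => if t \in L' then L' else t :: L') L (successors L).

Definition reachable_seq : seq profile :=
  iter 5 saturate [:: leaf_profile true; leaf_profile false].

(* Five rounds reach the fixpoint.  Locked, since unification would otherwise
   try to evaluate it. *)
Definition reachable : seq profile := locked reachable_seq.

Lemma reachable_closed : {subset successors reachable <= reachable}.
Proof. by apply/allP; rewrite /reachable -lock; vm_compute. Qed.

Lemma compose_bridge_reachable t1 t2 :
  t1 \in reachable -> t2 \in reachable -> {subset compose_bridge t1 t2 <= reachable}.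
Proof.
move=> t1R t2R t tC; apply: reachable_closed; rewrite mem_cat; apply/orP; left.
apply/flattenP; exists (compose_bridge t1 t2); last exact: tC.
by apply/allpairsP; exists (t1, t2); split => /=; [exact: t1R | exact: t2R |].
Qed.

Lemma compose_union_reachable b t2 :
  t2 \in reachable -> {subset compose_union (leaf_profile b) t2 <= reachable}.
Proof.
move=> t2R t tC; apply: reachable_closed; rewrite mem_cat; apply/orP; right.
apply/flattenP; exists (compose_union (leaf_profile b) t2); last exact: tC.
by apply/allpairsP; exists (b, t2); split => /=; [case: b {tC} | exact: t2R |].
Qed.

Lemma leaf_reachable b : leaf_profile b \in reachable.
Proof. by rewrite /reachable -lock; case: b; vm_compute. Qed.

Definition good_profile (t : profile) : bool :=
  let: (cr, (z, cZ), s1, s2) := t in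
  (cr && (0 < z) ==> has (fun o => (0 < o.1) && o.2) s2 || has (fun o => (0 < o.1) && ~~ o.2) s1)
  && ((z == 0) && cZ && ~~ cr ==> has snd s1).

Lemma reachable_good : all good_profile reachable.
Proof. by rewrite /reachable -lock; vm_compute. Qed.

Section Realization.
Variables (V : finType) (e : rel V) (Z : {set V}).

Definition single_outcome (F : {set V}) (r : V) (o : nat * bool) : Prop :=
  exists2 u, u \in Z :&: F & outcome e F r [set u] = o.

Definition pair_outcome (F : {set V}) (r : V) (o : nat * bool) : Prop :=
  exists u v, [/\ u \in Z :&: F, v \in Z :&: F & outcome e F r [set u; v] = o].

Definition realizes (F : {set V}) (r : V) (t : profile) : Prop :=
  let: (cr, oZ, s1, s2) := t in
  [/\ cr = critical e F r, oZ = capped (outcome e F r Z),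
      {in s1, forall o, single_outcome F r o} & {in s2, forall o, pair_outcome F r o}].

Lemma realizes_root_critical F r t : realizes F r t -> root_critical t = critical e F r.
Proof. by case: t => [[[cr oZ] s1] s2] []. Qed.

Section Composition.
Variables (cb : nat * bool -> nat * bool -> nat * bool) (F1 F2 : {set V}) (r1 r2 : V).
Hypothesis cb_capped :
  forall p q x y, capped (cb (p, x) (q, y)) = capped (cb (minn p 3, x) (minn q 3, y)).
Hypothesis dF : [disjoint F1 & F2].
Hypothesis outcome_cb :
  forall Y, outcome e (F1 :|: F2) r1 Y = cb (outcome e F1 r1 Y) (outcome e F2 r2 Y).

Let Z_F1 u : u \in Z :&: F1 -> (u \in Z :&: (F1 :|: F2)) && (u \notin F2).
Proof. by rewrite !inE => /andP[-> uF1]; rewrite uF1 (disjointFr dF uF1). Qed.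

Let Z_F2 u : u \in Z :&: F2 -> (u \in Z :&: (F1 :|: F2)) && (u \notin F1).
Proof. by rewrite !inE => /andP[-> uF2]; rewrite uF2 orbT (disjointFl dF uF2). Qed.

Lemma single_outcome_l o : single_outcome F1 r1 o ->
  single_outcome (F1 :|: F2) r1 (cb o (0, critical e F2 r2)).
Proof.
case=> u /Z_F1/andP[uZ uF2] <-; exists u => //.
by rewrite outcome_cb (outcome_disjoint e r2) // disjoint_sym disjoints1.
Qed.

Lemma single_outcome_r o : single_outcome F2 r2 o ->
  single_outcome (F1 :|: F2) r1 (cb (0, critical e F1 r1) o).
Proof.
case=> u /Z_F2/andP[uZ uF1] <-; exists u => //.
by rewrite outcome_cb (outcome_disjoint e r1) // disjoint_sym disjoints1.
Qed.

Lemma pair_outcome_l o : pair_outcome F1 r1 o ->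
  pair_outcome (F1 :|: F2) r1 (cb o (0, critical e F2 r2)).
Proof.
case=> u [v [/Z_F1/andP[uZ uF2] /Z_F1/andP[vZ vF2] <-]]; exists u, v; split => //.
by rewrite outcome_cb (outcome_disjoint e r2) //; exact: disjoint_set2.
Qed.

Lemma pair_outcome_r o : pair_outcome F2 r2 o ->
  pair_outcome (F1 :|: F2) r1 (cb (0, critical e F1 r1) o).
Proof.
case=> u [v [/Z_F2/andP[uZ uF1] /Z_F2/andP[vZ vF1] <-]]; exists u, v; split => //.
by rewrite outcome_cb (outcome_disjoint e r1) //; exact: disjoint_set2.
Qed.

Lemma pair_outcome_lr o1 o2 : single_outcome F1 r1 o1 -> single_outcome F2 r2 o2 ->
  pair_outcome (F1 :|: F2) r1 (cb o1 o2).
Proof.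
case=> u /Z_F1/andP[uZ uF2] <- [v /Z_F2/andP[vZ vF1] <-]; exists u, v; split => //.
rewrite outcome_cb (@eq_outcome _ e F1 _ [set u] r1) ?(@eq_outcome _ e F2 _ [set v] r2) //.
  by apply/setP => x; rewrite !inE; case: (x =P u) => [->|]; rewrite ?(negbTE uF2) ?andbF.
by apply/setP => x; rewrite !inE; case: (x =P v) => [->|]; rewrite ?(negbTE vF1) ?andbF ?orbF.
Qed.

Lemma compose_realizes t1 t2 : realizes F1 r1 t1 -> realizes F2 r2 t2 ->
  exists2 t, t \in compose cb t1 t2 & realizes (F1 :|: F2) r1 t.
Proof.
case: t1 => [[[c1 oZ1] s1] p1] [-> -> s1R p1R].
case: t2 => [[[c2 oZ2] s2] p2] [-> -> s2R p2R].
case E1: (outcome e F1 r1 Z) => [p x]; case E2: (outcome e F2 r2 Z) => [q y] /=.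
eexists.
  apply/allpairsP; exists (minn p 3, minn q 3).
  by split; rewrite /= ?drop_candidates_capped.
split.
- rewrite -[RHS]/((0, critical e (F1 :|: F2) r1).2) -(outcome0 e (F1 :|: F2)).
  by rewrite outcome_cb !outcome0.
- by rewrite outcome_cb E1 E2 -cb_capped.
- move=> o /mem_canon; rewrite mem_cat => /orP[] /mapP[o' o's ->].
    exact: single_outcome_l (s1R _ o's).
  exact: single_outcome_r (s2R _ o's).
move=> o /mem_canon; rewrite !mem_cat.
case/or3P => [/mapP[o' o's ->] | /mapP[o' o's ->] | /allpairsP[[o' o''] [/= o's o''s ->]]].
- exact: pair_outcome_l (p1R _ o's).
- exact: pair_outcome_r (p2R _ o's).
- exact: pair_outcome_lr (s1R _ o's) (s2R _ o''s).
Qed.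

End Composition.

Hypotheses (e_sym : symmetric e) (e_irr : irreflexive e).

Lemma leaf_realizes r : realizes [set r] r (leaf_profile (r \in Z)).
Proof.
have r_crit : critical e [set r] r by rewrite /critical inE eqxx setDv alpha_set0 alpha_set1.
have o_r : outcome e [set r] r [set r] = (1, false).
  by rewrite /outcome setDv alpha_set0 alpha_set1 // /critical inE.
case: (boolP (r \in Z)) => rZ.
  have o_Z : outcome e [set r] r Z = (1, false).
    rewrite -o_r; apply: eq_outcome; apply/setP => x.
    by rewrite !inE; case: (x =P r) => [->|]; rewrite ?rZ ?eqxx.
  have rZr : r \in Z :&: [set r] by rewrite !inE rZ eqxx.
  split; rewrite ?o_Z // => o; rewrite inE => /eqP->; first by exists r.
  by exists r, r; rewrite setUid.
have o_Z : outcome e [set r] r Z = (0, true).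
  rewrite -r_crit -(outcome0 e [set r] r); apply: eq_outcome; apply/setP => x.
  by rewrite !inE; case: (x =P r) => [->|]; rewrite ?(negbTE rZ).
by split; rewrite ?o_Z.
Qed.

Lemma forest_realizes n (F : {set V}) r : #|F| <= n -> acyclic_on e F -> r \in F ->
  exists2 t, t \in reachable & realizes F r t.
Proof.
elim: n F r => [|n IHn] F r Fn acF rF.
  by move: Fn; rewrite leqn0 cards_eq0 => /eqP F0; rewrite F0 inE in rF.
have smaller (A : {set V}) x : A \subset F -> x \in F -> x \notin A -> #|A| <= n.
  move=> sAF xF xA; have : A \proper F by apply/properP; split; last exists x.
  by rewrite properEcard => /andP[_ /leq_trans/(_ Fn)].
case: (pickP [pred c in F | e r c]) => [c /andP[cF erc] | isolated].
  set B := branch e F r c; have sBFr : B \subset F :\ r := branch_sub e F r c.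
  have sBF : B \subset F := subset_trans sBFr (subsetDl _ _).
  have cB : c \in B := mem_branch e_irr cF erc.
  have rB : r \notin B by apply: contraL rF => /(subsetP sBFr); rewrite !inE eqxx.
  have dB : [disjoint F :\: B & B] by apply/setDidPl; rewrite setDDl setUid.
  have defF : (F :\: B) :|: B = F.
    apply/setP => x; rewrite in_setU in_setD.
    by case: (boolP (x \in B)) => /= xB; rewrite ?orbF ?(subsetP sBF x xB).
  have cFB : c \notin F :\: B by rewrite inE cB.
  have rFB : r \in F :\: B by rewrite inE rF rB.
  have [t1 t1R t1F] :=
    IHn (F :\: B) r (smaller _ c (subsetDl _ _) cF cFB) (acyclic_onS (subsetDl _ _) acF) rFB.
  have [t2 t2R t2B] := IHn B c (smaller _ r sBF rF rB) (acyclic_onS sBF acF) cB.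
  have outcome_F Y : outcome e ((F :\: B) :|: B) r Y =
      bridge_outcome (root_critical t1 && root_critical t2)
        (outcome e (F :\: B) r Y) (outcome e B c Y).
    rewrite (realizes_root_critical t1F) (realizes_root_critical t2B).
    by apply: (outcome_bridge e_sym dB erc _ rB); apply: branch_bridge.
  have [t tC] := compose_realizes (bridge_outcome_capped _) dB outcome_F t1F t2B.
  by rewrite defF; exists t => //; apply: compose_bridge_reachable t1R t2R _ tC.
have no_edge : {in [set r] & F :\ r, forall x y, ~~ e x y}.
  by move=> x y /set1P-> /setD1P[_ yF]; move: (isolated y); rewrite /= yF /= => ->.
have rFr : r \notin F :\ r by rewrite !inE eqxx.
case: (set_0Vmem (F :\ r)) => [Fr0 | [r2 r2F]].
  exists (leaf_profile (r \in Z)); first exact: leaf_reachable.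
  by rewrite -(setD1K rF) Fr0 setU0; apply: leaf_realizes.
have [t2 t2R t2F] := IHn (F :\ r) r2 (smaller _ r (subsetDl _ _) rF rFr)
  (acyclic_onS (subsetDl _ _) acF) r2F.
have dr : [disjoint [set r] & F :\ r] by rewrite disjoints1.
have [t tC] := compose_realizes union_outcome_capped
  dr (outcome_union e_sym r2 dr no_edge rFr) (leaf_realizes r) t2F.
by rewrite (setD1K rF); exists t => //; apply: compose_union_reachable t2R _ tC.
Qed.

End Realization.

Unset Implicit Arguments.

Theorem lemma8 (V : finType) (e : rel V) (T Z : {set V}) (r : V) :
  simple_graph e -> is_tree e T -> r \in T ->
  (alpha e T > alpha e (T :\: Z) -> alpha_critical e T r ->
     (exists u v, [/\ u \in Z :&: T, v \in Z :&: T,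
                     alpha e T > alpha e (T :\: [set u; v]) &
                     alpha_critical e (T :\: [set u; v]) r])
     \/
     (exists u, [/\ u \in Z :&: T, alpha e T > alpha e (T :\ u) &
                    ~ alpha_critical e (T :\ u) r]))
  /\
  (alpha e T = alpha e (T :\: Z) -> alpha_critical e (T :\: Z) r ->
     ~ alpha_critical e T r ->
     exists u, u \in Z :&: T /\ alpha_critical e (T :\ u) r).
Proof.
move=> [e_sym e_irr] [_ [_ acT]] rT.
have [t tR tT] := forest_realizes Z e_sym e_irr (leqnn #|T|) acT rT.
have := allP reachable_good _ tR.
case: t tR tT => [[[cr [z cZ]] s1] s2] _ [crT zcE s1T s2T] /andP[good_a good_b].
case: zcE => zE cZE.
split=> [drop /criticalP rcrit | keep /criticalP rcritZ /criticalP rncrit].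
  have z_pos : 0 < z by rewrite zE; lia.
  move: good_a; rewrite crT rcrit z_pos => /orP[/hasP[o os /andP[]] | /hasP[o os /andP[]]].
    have [u [v [uZ vZ <-]]] := s2T o os; rewrite /= => ltuv critu.
    by left; exists u, v; split => //; [lia | apply/criticalP].
  have [u uZ <-] := s1T o os; rewrite /= => ltu ncritu.
  by right; exists u; split => //; [lia | move/criticalP; apply/negP].
have z0 : z = 0 by rewrite zE keep subnn.
move: good_b; rewrite z0 cZE crT (negbTE rncrit) rcritZ /= => /hasP[o os].
have [u uZ <-] := s1T o os; rewrite /= => critu.
by exists u; split => //; apply/criticalP.
Qed.
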